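(* Let $p$ be an odd prime, let $d>1$ be an integer, and let $q$ be an even power of $p$ with $q \equiv 1 \pmod{2d}$. The subfield $\mathbb{F}_{\sqrt{q}}$ of $\mathbb{F}_q$ forms a clique in the generalized Paley graph $GP(q,d)$ if and only if $d \mid (\sqrt{q}+1)$.
   Context: For a prime power $q$ and an integer $d>1$ with $d \mid q-1$, the $d$-Paley graph $GP(q,d)$ is the graph with vertex set $\mathbb{F}_q$ in which two distinct vertices $x,y$ are adjacent if and only if $x-y$ is a $d$-th power in $\mathbb{F}_q^*$. *)

From HB Require Import structures.
From mathcomp Require Import all_boot all_order all_algebra all_field.
Set Implicit Arguments. Unset Strict Implicit. Unset Printing Implicit Defensive.
Import GRing.Theory.
Local Open Scope ring_scope.

Definition is_dth_power (F : finFieldType) (d : nat) (x : F) : bool :=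
  [exists z : F, (z != 0) && (x == z ^+ d)].

Definition gp_adj (F : finFieldType) (d : nat) (x y : F) : bool :=
  (x != y) && is_dth_power d (x - y).

Definition gp_clique (F : finFieldType) (d : nat) (S : {set F}) : Prop :=
  forall x y, x \in S -> y \in S -> x != y -> gp_adj d x y.

(* The subfield of F of order r (when r = sqrt|F|): fixed points of x |-> x^r. *)
Definition subfield_of_order (F : finFieldType) (r : nat) : {set F} :=
  [set x : F | x ^+ r == x].

From HB Require Import structures.
From mathcomp Require Import all_boot all_order all_algebra all_field.
From mathcomp Require Import cyclic.
Local Open Scope ring_scope.
Import GRing.Theory.

(* Take a generator g of the cyclic group F^*, with |F^*| = (r - 1)(r + 1).
   Since d divides |F^*|, the d-th powers are exactly the g^i with d | i,
   while the nonzero elements of the subfield F_r are the g^i with r + 1 | i.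
   The subfield is closed under subtraction (Frobenius), so it is a clique
   iff all its nonzero elements are d-th powers, i.e. iff the subfield
   element g^(r+1) is one, i.e. iff d | r + 1. *)

Lemma expf_card_pred (F : finFieldType) (x : F) : x != 0 -> x ^+ #|F|.-1 = 1.
Proof.
move=> nz_x; apply: (mulfI nz_x).
by rewrite mulr1 -exprS prednK ?expf_card // (cardD1 x).
Qed.

Lemma finField_prim_root (F : finFieldType) :
  {g : F | (#|F|.-1).-primitive_root g}.
Proof.
have n_gt0 : (0 < #|F|.-1)%N by rewrite -ltnS prednK ?finNzRing_gt1 // (cardD1 0).
have : has (#|F|.-1).-primitive_root (enum (predC1 (0 : F))).
  apply: has_prim_root => //; last by rewrite -cardE cardC1.
  - apply/allP => x; rewrite mem_enum => nz_x.
    exact/unity_rootP/expf_card_pred.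
  - exact: enum_uniq.
by case/hasP/sig2W => g _ gP; exists g.
Qed.

Lemma prim_root_neq0 {R : idomainType} {n : nat} {z : R} :
  n.-primitive_root z -> z != 0.
Proof.
move=> zP; apply/eqP => z0; have := prim_expr_order zP.
by rewrite z0 expr0n gtn_eqF ?(prim_order_gt0 zP) //= => /eqP; rewrite eq_sym oner_eq0.
Qed.

Lemma subfield_of_order_subr {F : finFieldType} {p k : nat} {x y : F} :
  p \in [pchar F] ->
  x \in subfield_of_order F (p ^ k) -> y \in subfield_of_order F (p ^ k) ->
  x - y \in subfield_of_order F (p ^ k).
Proof.
move=> charFp; rewrite !inE => /eqP xS /eqP yS.
have charF_nat : [pchar F].-nat (p ^ k)%N.
  by rewrite (eq_pnat _ (pcharf_eq charFp)) pnatX pnat_id ?(pcharf_prime charFp).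
by rewrite exprDn_pchar // exprNn_pchar // xS yS.
Qed.

Section PrimitiveRootExponents.

Context {F : finFieldType} {g : F}.
Hypothesis gP : (#|F|.-1).-primitive_root g.

Lemma prim_root_exp_onto {x : F} : x != 0 -> exists i, x = g ^+ i.
Proof. by move/expf_card_pred/(prim_rootP gP) => [i ->]; exists i. Qed.

Lemma is_dth_power_prim_rootX (d i : nat) :
  (d %| #|F|.-1)%N -> is_dth_power d (g ^+ i) = (d %| i)%N.
Proof.
move=> dvd_d_n; apply/existsP/idP => [[z /andP[nz_z /eqP]] | /dvdnP[j ->]].
  have [j ->] := prim_root_exp_onto nz_z.
  rewrite -exprM => /eqP; rewrite (eq_prim_root_expr gP) => /eqP i_mod.
  by rewrite /dvdn -(modn_dvdm i dvd_d_n) i_mod modn_dvdm // modnMl.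
by exists (g ^+ j); rewrite (expf_neq0 _ (prim_root_neq0 gP)) -exprM eqxx.
Qed.

Lemma subfield_of_order_prim_rootX (r i : nat) :
  #|F| = (r ^ 2)%N -> (g ^+ i \in subfield_of_order F r) = (r.+1 %| i)%N.
Proof.
move=> cardF; have r_gt1 : (1 < r)%N.
  by rewrite -(ltn_exp2r _ _ (isT : (0 < 2)%N)) -cardF finNzRing_gt1.
have n_eq : #|F|.-1 = (r.+1 * r.-1)%N.
  by rewrite cardF -subn1 -(exp1n 2) subn_sqr addn1 mulnC subn1.
have r_pred_gt0 : (0 < r.-1)%N by rewrite -subn1 subn_gt0.
rewrite inE -exprM (eq_prim_root_expr gP) n_eq eqn_mod_dvd; last first.
  by rewrite leq_pmulr // ltnW.
by rewrite -{2}[i]muln1 -mulnBr subn1 dvdn_pmul2r.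
Qed.

End PrimitiveRootExponents.

Lemma gp_clique_subfield_of_order (F : finFieldType) (p k d : nat) :
  p \in [pchar F] -> #|F| = ((p ^ k) ^ 2)%N -> (d %| #|F|.-1)%N ->
  gp_clique d (subfield_of_order F (p ^ k)) <-> (d %| p ^ k + 1)%N.
Proof.
move=> charFp cardF dvd_d_n; have [g gP] := finField_prim_root F.
have dth_powerE i := is_dth_power_prim_rootX gP d i dvd_d_n.
have subfieldE i := subfield_of_order_prim_rootX gP (p ^ k) i cardF.
split=> [clique | dvd_d_r x y xS yS neq_xy].
  have gr_in : g ^+ (p ^ k).+1 \in subfield_of_order F (p ^ k).
    by rewrite subfieldE.
  have zero_in : 0 \in subfield_of_order F (p ^ k).
    by rewrite inE expr0n gtn_eqF // expn_gt0 prime_gt0 ?(pcharf_prime charFp).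
  have /andP[_] := clique _ _ gr_in zero_in (expf_neq0 _ (prim_root_neq0 gP)).
  by rewrite subr0 dth_powerE addn1.
rewrite /gp_adj neq_xy /=.
have nz_xy : x - y != 0 by rewrite subr_eq0.
have [i def_xy] := prim_root_exp_onto gP nz_xy.
have := subfield_of_order_subr charFp xS yS.
by rewrite def_xy subfieldE -addn1 dth_powerE => /(dvdn_trans dvd_d_r).
Qed.

Theorem lemma1p5 (p k d : nat) (F : finFieldType) :
  prime p -> odd p -> (0 < k)%N -> (1 < d)%N ->
  #|F| = (p ^ (2 * k))%N ->
  (p ^ (2 * k) = 1 %[mod 2 * d])%N ->
  gp_clique d (subfield_of_order F (p ^ k)) <-> (d %| p ^ k + 1)%N.
Proof.
move=> p_prime _ _ _ cardF q_mod.
apply: gp_clique_subfield_of_order; first exact: card_finPcharP cardF p_prime.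
  by rewrite cardF mulnC expnM.
have q_gt0 : (0 < p ^ (2 * k))%N by rewrite expn_gt0 prime_gt0.
have : (2 * d %| p ^ (2 * k) - 1)%N by rewrite -eqn_mod_dvd // q_mod.
by rewrite cardF subn1; apply: dvdn_trans; apply: dvdn_mull.
Qed.
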